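(* Let $X$ be a zero-dimensional Lindel\''of space. Then $X$ has the star-Hurewicz property if and only if $X$ has the Hurewicz property.
   Context: A space is zero-dimensional if it has a base of clopen sets. $St(A,\mathcal{P})=\bigcup\{P\in\mathcal{P}: P\cap A\ne\emptyset\}$. $X$ has the Hurewicz property if for each sequence $\langle\mathcal{U}_n\rangle$ of open covers there are finite $\mathcal{V}_n\subseteq\mathcal{U}_n$ such that each $x\in X$ belongs to $\bigcup\mathcal{V}_n$ for all but finitely many $n$. $X$ has the star-Hurewicz property if for each sequence $\langle\mathcal{U}_n\rangle$ of open covers there are finite $\mathcal{V}_n\subseteq\mathcal{U}_n$ such that each $x\in X$ belongs to $St(\bigcup\mathcal{V}_n,\mathcal{U}_n)$ for all but finitely many $n$. *)

From HB Require Import structures.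
From mathcomp Require Import all_boot all_order all_algebra.
From mathcomp Require Import all_classical all_reals all_analysis.
Set Implicit Arguments. Unset Strict Implicit. Unset Printing Implicit Defensive.
Local Open Scope classical_set_scope.

Section Defs.
Context {T : topologicalType}.

Definition open_cover (U : set (set T)) : Prop :=
  U `<=` open /\ [set: T] `<=` \bigcup_(A in U) A.

Definition zero_dim_space : Prop :=
  exists B : set (set T), B `<=` clopen /\ basis B.

Definition lindelof_space : Prop :=
  forall U, open_cover U ->
    exists2 V : set (set T), V `<=` U & countable V /\ [set: T] `<=` \bigcup_(A in V) A.

Definition star (A : set T) (P : set (set T)) : set T :=
  \bigcup_(B in [set B | P B /\ B `&` A !=set0]) B.

Definition hurewicz_space : Prop :=
  forall U : nat -> set (set T), (forall n, open_cover (U n)) ->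
    exists V : nat -> set (set T),
      (forall n, V n `<=` U n /\ finite_set (V n)) /\
      (forall x, exists N, forall n, (N <= n)%N -> (\bigcup_(A in V n) A) x).

Definition star_hurewicz_space : Prop :=
  forall U : nat -> set (set T), (forall n, open_cover (U n)) ->
    exists V : nat -> set (set T),
      (forall n, V n `<=` U n /\ finite_set (V n)) /\
      (forall x, exists N, forall n, (N <= n)%N ->
         star (\bigcup_(A in V n) A) (U n) x).
End Defs.

(* A Hurewicz selection is a star-Hurewicz one, since a union of members of a
   cover lies in its own star.  Conversely, a zero-dimensional Lindelof space is
   ultraparacompact: refine an open cover by clopen sets, take a countable
   subcover g_0, g_1, ... and disjointify it into the open sets
   g_k \ (g_0 u ... u g_(k-1)).  For a pairwise disjoint cover P and V <= P the
   star St(uV, P) is just uV, so a star-Hurewicz selection from disjoint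
   refinements of the U_n, pushed forward into the U_n, is a Hurewicz selection. *)

From mathcomp Require Import all_boot all_order all_algebra.
From mathcomp Require Import all_classical all_reals all_analysis.
Local Open Scope classical_set_scope.

Section StarHurewicz.
Context {T : topologicalType}.
Implicit Types U V P : set (set T).

Definition refines P U := forall A, P A -> exists2 B, U B & A `<=` B.

Definition ultraparacompact := forall U, open_cover U ->
  exists P, [/\ open_cover P, trivIset P id & refines P U].

Lemma refines_trans P V U : refines P V -> refines V U -> refines P U.
Proof.
move=> PV VU A /PV[B /VU[C UC BC] AB]; exists C => //; exact: subset_trans BC.
Qed.

Lemma zero_dim_clopen_refinement {U} : @zero_dim_space T -> open_cover U ->
  exists C, [/\ C `<=` clopen, open_cover C & refines C U].
Proof.
move=> [B [Bclopen [_ Bbasis]]] [Uopen Ucover].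
exists [set A | clopen A /\ exists2 C, U C & A `<=` C].
split; [by move=> A [] | split; first by move=> A [[]] | by move=> A []].
move=> x _; have [C UC Cx] := Ucover x I.
have : nbhs x C by apply: open_nbhs_nbhs; split => //; exact: Uopen.
move=> /Bbasis[A [BA Ax] AC].
by exists A => //; split; [exact: Bclopen | exists C].
Qed.

Lemma open_seqDU (g : nat -> set T) k :
  (forall i, clopen (g i)) -> open (seqDU g k).
Proof.
move=> gclopen; apply: openI; first by case: (gclopen k).
by apply: closed_openC; apply: closed_bigsetU => i _; case: (gclopen i).
Qed.

Lemma countable_clopen_disjoint_refinement {V} : countable V -> V `<=` clopen ->
  exists P, [/\ P `<=` open, trivIset P id,
    \bigcup_(A in P) A = \bigcup_(A in V) A & refines P V].
Proof.
move=> /pfcard_geP[->|/surjfunPex[g ->]] Vclopen.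
  by exists set0; split => // A [].
have gclopen k : clopen (g k) by apply: Vclopen; exists k.
exists (seqDU g @` setT); split.
- by move=> _ [k _ <-]; exact: open_seqDU.
- by apply: trivIset_sets; exact: trivIset_seqDU.
- by rewrite !bigcup_image -seqDU_bigcup_eq.
- by move=> _ [k _ <-]; exists (g k); [exists k | exact: subset_seqDU].
Qed.

Lemma zero_dim_lindelof_ultraparacompact :
  @zero_dim_space T -> @lindelof_space T -> ultraparacompact.
Proof.
move=> zd lin U Ucover.
have [C [Cclopen Ccover CU]] := zero_dim_clopen_refinement zd Ucover.
have [V VC [Vcountable Vcover]] := lin C Ccover.
have VU : refines V U by apply: refines_trans CU => A /VC CA; exists A.
have [P [Popen Pdisj PV PVref]] :=
  countable_clopen_disjoint_refinement Vcountable (subset_trans VC Cclopen).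
exists P; split => //; last exact: refines_trans PVref VU.
by split; rewrite // PV.
Qed.

Lemma bigcup_sub_star V P : V `<=` P ->
  \bigcup_(A in V) A `<=` star (\bigcup_(A in V) A) P.
Proof.
move=> VP x [A VA Ax]; exists A => //.
by split; [exact: VP | exists x; split => //; exists A].
Qed.

Lemma star_bigcup_trivIset V P : trivIset P id -> V `<=` P ->
  star (\bigcup_(A in V) A) P = \bigcup_(A in V) A.
Proof.
move=> Pdisj VP; apply/seteqP; split; last exact: bigcup_sub_star.
move=> x [B [PB [y [By [A VA Ay]]]] Bx].
by exists A => //; rewrite -(Pdisj B A) //; [exact: VP | exists y].
Qed.

Lemma refines_finite_bigcup P U V : refines P U -> V `<=` P -> finite_set V ->
  exists W, [/\ W `<=` U, finite_set W & \bigcup_(A in V) A `<=` \bigcup_(A in W) A].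
Proof.
move=> PU VP Vfin.
have /choice[h hP] : forall A, exists B, P A -> U B /\ A `<=` B.
  move=> A; have [/PU[B UB AB]|nPA] := pselect (P A); first by exists B.
  by exists set0 => /nPA.
exists (h @` V); split; first by move=> _ [A VA <-]; case: (hP A (VP A VA)).
  exact: finite_image.
move=> x [A VA Ax]; exists (h A); first by exists A.
by case: (hP A (VP A VA)) => _; apply.
Qed.

Lemma star_hurewicz_of_hurewicz : @hurewicz_space T -> @star_hurewicz_space T.
Proof.
move=> H U Ucover; have [V [VU Vev]] := H U Ucover.
exists V; split => // x; have [N HN] := Vev x.
by exists N => n /HN; apply: bigcup_sub_star; case: (VU n).
Qed.

Lemma hurewicz_of_star_hurewicz :
  ultraparacompact -> @star_hurewicz_space T -> @hurewicz_space T.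
Proof.
move=> upc SH U Ucover.
have /choice[P HP] := fun n => upc (U n) (Ucover n).
have Pcover n : open_cover (P n) by case: (HP n).
have [V [VP Vev]] := SH P Pcover.
have /choice[W HW] : forall n, exists W, [/\ W `<=` U n, finite_set W &
    \bigcup_(A in V n) A `<=` \bigcup_(A in W) A].
  by move=> n; have [_ _ PU] := HP n; case: (VP n); exact: refines_finite_bigcup.
exists W; split; first by move=> n; case: (HW n).
move=> x; have [N HN] := Vev x; exists N => n /HN.
have [_ Pdisj _] := HP n; have [_ _ VW] := HW n.
by rewrite star_bigcup_trivIset //; [exact: VW | case: (VP n)].
Qed.

End StarHurewicz.

Theorem mainTheorem15 (X : topologicalType) :
  @zero_dim_space X -> @lindelof_space X ->
  (@star_hurewicz_space X <-> @hurewicz_space X).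
Proof.
move=> zd lin; split; last exact: star_hurewicz_of_hurewicz.
by apply/hurewicz_of_star_hurewicz/zero_dim_lindelof_ultraparacompact.
Qed.
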